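(* Let $n$ be a composite positive integer. Then there exists a normalized Latin square of size $n$ with entries in $\{1,\dots,n\}$ that is singular (its determinant as a real matrix is $0$).
   Context: A Latin square of size $n$ with entries in $\{1,\dots,n\}$ is an $n\times n$ matrix in which each of $1,\dots,n$ occurs exactly once in each row and each column; it is normalized if its first column is $(1,2,\dots,n)^T$. It is singular if it is not invertible as a real matrix. *)

From mathcomp Require Import all_boot all_order all_algebra.
Set Implicit Arguments. Unset Strict Implicit. Unset Printing Implicit Defensive.
Import GRing.Theory Num.Theory.

(* A Latin square of size n is encoded as L : 'M['I_n]_n, where the
   ordinal value k stands for the symbol k+1 in {1,...,n}. *)
Definition latin_square (n : nat) (L : 'M['I_n]_n) : Prop :=
  (forall i : 'I_n, injective (fun j => L i j)) /\
  (forall j : 'I_n, injective (fun i => L i j)).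

(* normalized: first column is (1,2,...,n)^T, i.e. L i 0 = i (shifted) *)
Definition normalized (n : nat) (L : 'M['I_n]_n) : Prop :=
  forall (i j : 'I_n), val j = 0%N -> L i j = i.

Definition latin_mx (n : nat) (L : 'M['I_n]_n) : 'M[int]_n :=
  \matrix_(i, j) (Posz (val (L i j)).+1).

Definition composite (n : nat) : bool := (1 < n)%N && ~~ prime n.

From mathcomp Require Import all_boot all_order all_algebra.
From mathcomp Require Import zify.
Local Open Scope ring_scope.
Import GRing.Theory Num.Theory.

(* Write the composite n as n = a * b with a, b >= 2.  Read
   every i < a * b as the pair of "digits" (i %/ b, i %% b) of Z_a x Z_b and
   let L be the addition table of this group: an addition table is a Latin
   square (the group law cancels on both sides), and it is normalized because
   0 is the neutral element and indexes the first column.  Addition acts on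
   the two digits separately, so for every row i the entries of the columns
   0, b, 1 and b+1 (the group elements (0,0), (1,0), (0,1), (1,1)) satisfy
     L i 0 + L i (b+1) = L i b + L i 1
   as natural numbers.  Hence col 0 - col b - col 1 + col (b+1) = 0 in the
   matrix of symbols, which is therefore singular. *)

Lemma det0_col_relation (R : idomainType) (n : nat) (M : 'M[R]_n)
    (j0 j1 j2 j3 : 'I_n) :
  j0 != j1 -> j0 != j2 -> j0 != j3 ->
  (forall i, M i j0 + M i j3 = M i j1 + M i j2) -> \det M = 0.
Proof.
move=> j01 j02 j03 rel; apply/eqP; rewrite -det_tr; apply/det0P.
exists ('e_j0 - 'e_j1 - 'e_j2 + 'e_j3).
  apply/eqP => /rowP /(_ j0); rewrite !mxE eqxx (negbTE j01) (negbTE j02).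
  by rewrite (negbTE j03) eqxx /= !subr0 addr0 => /eqP; rewrite oner_eq0.
rewrite !mulmxDl !mulNmx -!rowE; apply/rowP => i; rewrite !mxE.
by rewrite addrAC [X in X - _]addrAC rel -addrA -opprD subrr.
Qed.

Section DigitAddition.
Variables a b : nat.
Hypotheses (a_gt0 : (0 < a)%N) (b_gt0 : (0 < b)%N).

(* The sum in Z_a x Z_b of the numbers i and j read as digit pairs. *)
Definition digit_add (i j : nat) : nat :=
  (b * ((i %/ b + j %/ b) %% a) + (i %% b + j %% b) %% b)%N.

Lemma digit_add_lt (i j : nat) : (digit_add i j < a * b)%N.
Proof.
have hi : ((i %/ b + j %/ b) %% a < a)%N by rewrite ltn_pmod.
have lo : ((i %% b + j %% b) %% b < b)%N by rewrite ltn_pmod.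
rewrite /digit_add; nia.
Qed.

Lemma digit_add_div (i j : nat) :
  (digit_add i j %/ b = (i %/ b + j %/ b) %% a)%N.
Proof.
by rewrite /digit_add mulnC divnMDl // (divn_small (ltn_pmod _ b_gt0)) addn0.
Qed.

Lemma digit_add_mod (i j : nat) :
  (digit_add i j %% b = (i %% b + j %% b) %% b)%N.
Proof. by rewrite /digit_add mulnC modnMDl modn_mod. Qed.

Lemma digit_addC (i j : nat) : digit_add i j = digit_add j i.
Proof. by rewrite /digit_add (addnC (i %/ b)%N) (addnC (i %% b)%N). Qed.

Lemma digit_hi_lt (i : nat) : (i < a * b)%N -> (i %/ b < a)%N.
Proof. by move=> lt_i; rewrite ltn_divLR // mulnC. Qed.

Lemma digit_add0 (i : nat) : (i < a * b)%N -> digit_add i 0 = i.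
Proof.
move=> /digit_hi_lt hi.
by rewrite /digit_add div0n mod0n !addn0 modn_mod (modn_small hi) mulnC -divn_eq.
Qed.

Lemma digit_add_inj (i j j' : nat) : (j < a * b)%N -> (j' < a * b)%N ->
  digit_add i j = digit_add i j' -> j = j'.
Proof.
move=> lt_j lt_j' e.
have /eqP := congr1 (divn^~ b) e; rewrite !digit_add_div eqn_modDl.
rewrite !modn_small ?digit_hi_lt // => /eqP e_hi.
have /eqP := congr1 (modn^~ b) e; rewrite !digit_add_mod eqn_modDl.
rewrite !modn_mod => /eqP e_lo.
by rewrite (divn_eq j b) (divn_eq j' b) e_hi e_lo.
Qed.

(* Columns 0, 1, b, b+1 are the elements (0,0), (0,1), (1,0), (1,1); with
   i = (q, r) both sides equal b * (q + (q+1) %% a) + r + (r+1) %% b. *)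
Lemma digit_add_square (i : nat) : (1 < b)%N ->
  (digit_add i 0 + digit_add i b.+1 = digit_add i b + digit_add i 1)%N.
Proof.
move=> b_gt1; have b1 : (b.+1 = 1 * b + 1)%N by rewrite mul1n addn1.
rewrite /digit_add b1 divnMDl // modnMDl divnn b_gt0 (divn_small b_gt1).
by rewrite (modn_small b_gt1) div0n mod0n modnn !addn0 /=; lia.
Qed.

Definition digit_table : 'M['I_(a * b)]_(a * b) :=
  \matrix_(i, j) Ordinal (digit_add_lt i j).

(* Rows are Latin by left cancellation, columns by commutativity. *)
Lemma digit_table_latin : latin_square digit_table.
Proof.
split=> [i j j' | j i i']; rewrite /= !mxE => /(congr1 val) /= e; apply: val_inj.
  exact: digit_add_inj e.
by rewrite digit_addC [RHS]digit_addC in e; exact: digit_add_inj e.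
Qed.

Lemma digit_table_normalized : normalized digit_table.
Proof. by move=> i j j0; apply: val_inj; rewrite mxE /= j0 digit_add0. Qed.

(* The column relation of digit_add_square survives the shift of symbols
   by 1, so the symbol matrix is singular as soon as the four columns exist. *)
Lemma digit_table_singular : (1 < a)%N -> (1 < b)%N ->
  \det (latin_mx digit_table) = 0.
Proof.
move=> a_gt1 b_gt1.
have lt0 : (0 < a * b)%N by nia.
have lt1 : (1 < a * b)%N by nia.
have ltb : (b < a * b)%N by nia.
have ltb1 : (b.+1 < a * b)%N by nia.
apply: (@det0_col_relation _ _ _
  (Ordinal lt0) (Ordinal ltb) (Ordinal lt1) (Ordinal ltb1)) => [||| i].
- by rewrite -val_eqE /= eq_sym -lt0n.
- by [].
- by [].
rewrite !mxE /= -!PoszD; congr Posz.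
by have := digit_add_square i b_gt1; lia.
Qed.

End DigitAddition.

Lemma composite_factor (n : nat) : composite n ->
  exists a b : nat, [/\ (1 < a)%N, (1 < b)%N & n = (a * b)%N].
Proof.
case/andP=> n_gt1 n_not_prime; have pr_a := pdiv_prime n_gt1.
exists (pdiv n), (n %/ pdiv n)%N; split; first exact: prime_gt1.
  case: (n %/ pdiv n)%N (divnK (pdiv_dvd n)) => [|[|k]] // e.
    by rewrite mul0n in e; rewrite -e in n_gt1.
  by rewrite mul1n in e; rewrite -e pr_a in n_not_prime.
by rewrite mulnC divnK // pdiv_dvd.
Qed.

Theorem mainTheorem5 (n : nat) (hn : composite n) :
  exists L : 'M['I_n]_n,
    [/\ latin_square L, normalized L & \det (latin_mx L) = 0].
Proof.
have [a [b [a_gt1 b_gt1 ->]]] := composite_factor n hn.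
have a_gt0 : (0 < a)%N by exact: ltnW.
have b_gt0 : (0 < b)%N by exact: ltnW.
exists (@digit_table a b a_gt0 b_gt0); split.
- exact: digit_table_latin.
- exact: digit_table_normalized.
- exact: digit_table_singular.
Qed.
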